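(* Let $\mathsf V$ be a quantale whose underlying lattice is a Heyting algebra and which satisfies $w\wedge(u\otimes v)=\bigvee\{u'\otimes v'\mid u'\le u,\ v'\le v,\ u'\otimes v'\le w\}$ for all $u,v,w\in\mathsf V$. Then the full subcategory of $\mathsf{Cat}(\mathsf V)$ consisting of the injective $\mathsf V$-categories is Cartesian closed.
   Context: A quantale $(\mathsf V,\otimes,k)$ is a complete anti-symmetric lattice with an associative, commutative operation $\otimes$ with neutral element $k$ distributing over arbitrary suprema. A $\mathsf V$-category $(X,a)$ is a set with $a:X\times X\to\mathsf V$ such that $k\le a(x,x)$ and $a(x,y)\otimes a(y,z)\le a(x,z)$; a $\mathsf V$-functor $f:(X,a)\to(Y,b)$ satisfies $a(x,y)\le b(f(x),f(y))$; these form $\mathsf{Cat}(\mathsf V)$, whose products have structure given by pointwise $\wedge$. $f$ is fully faithful if $a(x,y)=b(f(x),f(y))$. For $\mathsf V$-functors $f,g$, $f\simeq g$ means $k\le b(f(x),g(x))$ and $k\le b(g(x),f(x))$ for all $x$. $X$ is injective if for every fully faithful $i:A\to B$ and $f:A\to X$ there is $g:B\to X$ with $g\cdot i\simeq f$. *)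

Set Implicit Arguments.
Unset Strict Implicit.

Record quantale := Quantale {
  qV :> Type;
  qle : qV -> qV -> Prop;
  qle_refl : forall u, qle u u;
  qle_trans : forall u v w, qle u v -> qle v w -> qle u w;
  qle_antisym : forall u v, qle u v -> qle v u -> u = v;
  qsup : (qV -> Prop) -> qV;
  qsup_ub : forall (S : qV -> Prop) u, S u -> qle u (qsup S);
  qsup_least : forall (S : qV -> Prop) w, (forall u, S u -> qle u w) -> qle (qsup S) w;
  qten : qV -> qV -> qV;
  qk : qV;
  qten_assoc : forall u v w, qten u (qten v w) = qten (qten u v) w;
  qten_comm : forall u v, qten u v = qten v u;
  qten_unit : forall u, qten qk u = u;
  qten_sup : forall u (S : qV -> Prop),
      qten u (qsup S) = qsup (fun x => exists s, S s /\ x = qten u s)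
}.

Arguments qle {q}.
Arguments qsup {q}.
Arguments qten {q}.
Arguments qk {q}.

Definition qmeet (V : quantale) (u v : V) : V :=
  qsup (fun w => qle w u /\ qle w v).

Definition heyting (V : quantale) : Prop :=
  exists imp : V -> V -> V,
    forall a b c : V, qle c (imp a b) <-> qle (qmeet c a) b.

Definition meet_tensor_condition (V : quantale) : Prop :=
  forall u v w : V,
    qmeet w (qten u v) =
    qsup (fun x => exists u' v' : V,
            qle u' u /\ qle v' v /\ qle (qten u' v') w /\ x = qten u' v').

Record vcat (V : quantale) := VCat {
  vob :> Type;
  vhom : vob -> vob -> V;
  vhom_refl : forall x, qle qk (vhom x x);
  vhom_trans : forall x y z, qle (qten (vhom x y) (vhom y z)) (vhom x z)
}.

Arguments vhom {V} _ _ _.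

Definition vfunctor (V : quantale) (X Y : vcat V) (f : X -> Y) : Prop :=
  forall x y, qle (vhom X x y) (vhom Y (f x) (f y)).

Definition fully_faithful (V : quantale) (X Y : vcat V) (f : X -> Y) : Prop :=
  forall x y, vhom X x y = vhom Y (f x) (f y).

Definition viso (V : quantale) (X Y : vcat V) (f g : X -> Y) : Prop :=
  forall x, qle qk (vhom Y (f x) (g x)) /\ qle qk (vhom Y (g x) (f x)).

Definition injective_vcat (V : quantale) (X : vcat V) : Prop :=
  forall (A B : vcat V) (i : A -> B) (f : A -> X),
    vfunctor i -> fully_faithful i -> vfunctor f ->
    exists g : B -> X, vfunctor g /\ viso (fun a => g (i a)) f.

(** * Cartesian closedness of the full subcategory of Cat(V) on the
      objects satisfying P (morphisms = V-functors; two morphisms are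
      equal iff they are equal as functions, stated pointwise). *)
Section FullSub.
Variables (V : quantale) (P : vcat V -> Prop).

Definition is_terminal_in (T : vcat V) : Prop :=
  P T /\
  forall X : vcat V, P X ->
    (exists f : X -> T, vfunctor f) /\
    (forall f g : X -> T, vfunctor f -> vfunctor g -> forall x, f x = g x).

Definition is_product_in {A B C : vcat V} (p1 : C -> A) (p2 : C -> B) : Prop :=
  P C /\ vfunctor p1 /\ vfunctor p2 /\
  forall (Z : vcat V), P Z -> forall (f : Z -> A) (g : Z -> B),
    vfunctor f -> vfunctor g ->
    (exists h : Z -> C, vfunctor h /\ forall z, p1 (h z) = f z /\ p2 (h z) = g z) /\
    (forall h h' : Z -> C, vfunctor h -> vfunctor h' ->
        (forall z, p1 (h z) = f z /\ p2 (h z) = g z) ->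
        (forall z, p1 (h' z) = f z /\ p2 (h' z) = g z) ->
        forall z, h z = h' z).

(** (E, ev : C -> Z) is an exponential Z^X, where (C, c1, c2) is a product
    E x X; the transpose condition for h : A -> E and a product (Q,q1,q2) of
    A and X says ev o (h x id_X) = g, with h x id_X : Q -> C the induced map. *)
Definition transposes {X Z E C : vcat V} (c1 : C -> E) (c2 : C -> X) (ev : C -> Z)
    {A Q : vcat V} (q1 : Q -> A) (q2 : Q -> X) (g : Q -> Z) (h : A -> E) : Prop :=
  exists m : Q -> C, vfunctor m /\
    forall q, c1 (m q) = h (q1 q) /\ c2 (m q) = q2 q /\ ev (m q) = g q.

Definition is_exponential_in {X Z E C : vcat V} (c1 : C -> E) (c2 : C -> X)
    (ev : C -> Z) : Prop :=
  P E /\ is_product_in c1 c2 /\ vfunctor ev /\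
  forall (A : vcat V), P A ->
  forall (Q : vcat V) (q1 : Q -> A) (q2 : Q -> X), is_product_in q1 q2 ->
  forall g : Q -> Z, vfunctor g ->
    (exists h : A -> E, vfunctor h /\ transposes c1 c2 ev q1 q2 g h) /\
    (forall h h' : A -> E, vfunctor h -> vfunctor h' ->
       transposes c1 c2 ev q1 q2 g h -> transposes c1 c2 ev q1 q2 g h' ->
       forall a, h a = h' a).

Definition cartesian_closed_sub : Prop :=
  (exists T : vcat V, is_terminal_in T) /\
  (forall A B : vcat V, P A -> P B ->
     exists (C : vcat V) (p1 : C -> A) (p2 : C -> B), is_product_in p1 p2) /\
  (forall X Z : vcat V, P X -> P Z ->
     exists (E C : vcat V) (c1 : C -> E) (c2 : C -> X) (ev : C -> Z),
       is_exponential_in c1 c2 ev).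

End FullSub.

(* Products of injective V-categories are computed as in Cat(V), with the
   pointwise meet; the terminal object carries the top element.  The heart of
   the matter is the exponential: an injective X interpolates, i.e. any
   [u (x) v <= X(x0, x2)] factors through a point [x1] with [u <= X(x0, x1)] and
   [v <= X(x1, x2)] (extend X by a point realising the factorisation and retract).
   Combined with the meet-tensor condition this makes
     [Z^X(f, g) = \/ { u | forall x x', u /\ X(x, x') <= Z(f x, g x') }]
   transitive; the Heyting condition lets [Z^X(f, g) /\ -] pass through this
   supremum, giving evaluation, and injectivity of Z^X is inherited from Z by
   extending along [i x id_X]. *)
From Stdlib Require Import ProofIrrelevance FunctionalExtensionality.
Set Implicit Arguments.
Unset Strict Implicit.

Section QuantaleFacts.
Variable V : quantale.
Implicit Types u v w a b c d : V.

Definition qtop : V := qsup (fun _ => True).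

Lemma qle_top u : qle u qtop.
Proof. now apply qsup_ub. Qed.

Lemma qten_monor a b c : qle a b -> qle (qten c a) (qten c b).
Proof.
  intros Hab.
  assert (Hsup : qsup (fun w => w = a \/ w = b) = b).
  { apply qle_antisym.
    - apply qsup_least. intros w [-> | ->]; [exact Hab | apply qle_refl].
    - apply qsup_ub. now right. }
  rewrite <- Hsup, qten_sup. apply qsup_ub. exists a. auto.
Qed.

Lemma qten_monol a b c : qle a b -> qle (qten a c) (qten b c).
Proof. intros Hab. rewrite (qten_comm a), (qten_comm b). now apply qten_monor. Qed.

Lemma qten_mono a b c d : qle a b -> qle c d -> qle (qten a c) (qten b d).
Proof. intros Hab Hcd. apply (qle_trans (qten_monol c Hab)), qten_monor, Hcd. Qed.

Lemma qten_supr_le a S b :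
  (forall s, S s -> qle (qten a s) b) -> qle (qten a (qsup S)) b.
Proof. intros H. rewrite qten_sup. apply qsup_least. intros x [s [Hs ->]]. auto. Qed.

Lemma qten_supl_le S a b :
  (forall s, S s -> qle (qten s a) b) -> qle (qten (qsup S) a) b.
Proof.
  intros H. rewrite qten_comm. apply qten_supr_le.
  intros s Hs. rewrite qten_comm. auto.
Qed.

Lemma qten_unit_r u : qten u qk = u.
Proof. rewrite qten_comm. apply qten_unit. Qed.

Lemma qten_AC a b c : qten (qten a b) c = qten (qten a c) b.
Proof. rewrite <- !qten_assoc. now rewrite (qten_comm b c). Qed.

Lemma qmeet_lel a b : qle (qmeet a b) a.
Proof. apply qsup_least. now intros u []. Qed.

Lemma qmeet_ler a b : qle (qmeet a b) b.
Proof. apply qsup_least. now intros u []. Qed.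

Lemma qmeet_glb a b c : qle c a -> qle c b -> qle c (qmeet a b).
Proof. intros. now apply qsup_ub. Qed.

Lemma qmeet_comm a b : qmeet a b = qmeet b a.
Proof. apply qle_antisym; apply qmeet_glb; apply qmeet_lel || apply qmeet_ler. Qed.

Lemma qmeet_mono a b c d : qle a b -> qle c d -> qle (qmeet a c) (qmeet b d).
Proof.
  intros Hab Hcd. apply qmeet_glb.
  - exact (qle_trans (qmeet_lel a c) Hab).
  - exact (qle_trans (qmeet_ler a c) Hcd).
Qed.

Lemma qmeet_supl_le (HV : heyting V) S a b :
  (forall s, S s -> qle (qmeet s a) b) -> qle (qmeet (qsup S) a) b.
Proof.
  destruct HV as [imp Himp]. intros H.
  apply Himp, qsup_least. intros s Hs. now apply Himp, H.
Qed.

Definition qres u a : V := qsup (fun w => qle (qten w u) a).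

Lemma qten_qres_le u a : qle (qten (qres u a) u) a.
Proof. now apply qten_supl_le. Qed.

Lemma qle_qres w u a : qle (qten w u) a -> qle w (qres u a).
Proof. intros. now apply qsup_ub. Qed.

End QuantaleFacts.

Section Products.
Variable V : quantale.

Lemma vhom_comp (X : vcat V) (x y z : X) (a b : V) :
  qle a (vhom X x y) -> qle b (vhom X y z) -> qle (qten a b) (vhom X x z).
Proof. intros Ha Hb. exact (qle_trans (qten_mono Ha Hb) (vhom_trans x y z)). Qed.

Definition vprod_hom (A B : vcat V) (p q : A * B) : V :=
  qmeet (vhom A (fst p) (fst q)) (vhom B (snd p) (snd q)).

Lemma vprod_hom_refl (A B : vcat V) (p : A * B) : qle qk (@vprod_hom A B p p).
Proof. apply qmeet_glb; apply vhom_refl. Qed.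

Lemma vprod_hom_trans (A B : vcat V) (p q r : A * B) :
  qle (qten (@vprod_hom A B p q) (@vprod_hom A B q r)) (@vprod_hom A B p r).
Proof.
  apply qmeet_glb; eapply vhom_comp; apply qmeet_lel || apply qmeet_ler.
Qed.

Definition vprod (A B : vcat V) : vcat V :=
  VCat (@vprod_hom_refl A B) (@vprod_hom_trans A B).

Definition vunit : vcat V :=
  @VCat V unit (fun _ _ => qtop V) (fun _ => qle_top _) (fun _ _ _ => qle_top _).

Lemma vfunctor_fst (A B : vcat V) : vfunctor (X := vprod A B) fst.
Proof. intros p q. apply qmeet_lel. Qed.

Lemma vfunctor_snd (A B : vcat V) : vfunctor (X := vprod A B) snd.
Proof. intros p q. apply qmeet_ler. Qed.

Lemma vfunctor_pair (A B Z : vcat V) (f : Z -> A) (g : Z -> B) :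
  vfunctor f -> vfunctor g -> vfunctor (Y := vprod A B) (fun z => (f z, g z)).
Proof. intros Hf Hg x y. apply qmeet_glb; [apply Hf | apply Hg]. Qed.

Lemma injective_vprod (A B : vcat V) :
  injective_vcat A -> injective_vcat B -> injective_vcat (vprod A B).
Proof.
  intros HA HB A' B' i f Hi Hff Hf.
  destruct (HA A' B' i (fun a => fst (f a)) Hi Hff) as [g1 [Hg1 Hiso1]].
  { intros x y. exact (qle_trans (Hf x y) (qmeet_lel _ _)). }
  destruct (HB A' B' i (fun a => snd (f a)) Hi Hff) as [g2 [Hg2 Hiso2]].
  { intros x y. exact (qle_trans (Hf x y) (qmeet_ler _ _)). }
  exists (fun b => (g1 b, g2 b)). split.
  - now apply vfunctor_pair.
  - intros x. destruct (Hiso1 x), (Hiso2 x). split; now apply qmeet_glb.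
Qed.

Lemma injective_vunit : injective_vcat vunit.
Proof.
  intros A B i f _ _ _. exists (fun _ => tt). split.
  - intros x y. apply qle_top.
  - intros x. split; apply qle_top.
Qed.

Lemma vprod_is_product (P : vcat V -> Prop) (A B : vcat V) :
  P (vprod A B) -> is_product_in P (C := vprod A B) fst snd.
Proof.
  intros HAB. split; [exact HAB |]. split; [apply vfunctor_fst |].
  split; [apply vfunctor_snd |].
  intros Z _ f g Hf Hg. split.
  - exists (fun z => (f z, g z)). split; [now apply vfunctor_pair | easy].
  - intros h h' _ _ Hh Hh' z. destruct (Hh z), (Hh' z).
    rewrite (surjective_pairing (h z)), (surjective_pairing (h' z)). congruence.
Qed.

Lemma vunit_is_terminal (P : vcat V -> Prop) : P vunit -> is_terminal_in P vunit.
Proof.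
  intros Hunit. split; [exact Hunit |]. intros X _. split.
  - exists (fun _ => tt). intros x y. apply qle_top.
  - intros f g _ _ x. now destruct (f x), (g x).
Qed.

Lemma is_product_in_vprod_section (P : vcat V -> Prop) (A B Q : vcat V)
    (q1 : Q -> A) (q2 : Q -> B) :
  P (vprod A B) -> is_product_in P q1 q2 ->
  exists h : vprod A B -> Q, vfunctor h /\
    (forall p, q1 (h p) = fst p /\ q2 (h p) = snd p) /\
    (forall q, h (q1 q, q2 q) = q).
Proof.
  intros HAB [HQ [Hq1 [Hq2 HQuniv]]].
  destruct (proj1 (HQuniv _ HAB fst snd (@vfunctor_fst A B) (@vfunctor_snd A B)))
    as [h [Hh Hhproj]].
  exists h. split; [exact Hh |]. split; [exact Hhproj |]. intros q.
  apply (proj2 (HQuniv Q HQ q1 q2 Hq1 Hq2) (fun q => h (q1 q, q2 q)) (fun q => q)).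
  - intros x y. apply (qle_trans (vfunctor_pair Hq1 Hq2 x y)), Hh.
  - intros x y. apply qle_refl.
  - intros z. apply Hhproj.
  - easy.
Qed.

End Products.

Section AdjoinPoint.
Variables (V : quantale) (X : vcat V) (x0 : X) (u : V).

(* [None] is a new point [*] with [X(y, * ) = X(y, x0) (x) u] and
   [X( *, z) = u -o X(x0, z)]: a retraction onto [X] sends [*] to a point
   interpolating any [u (x) v <= X(x0, x2)]. *)
Let to_pt (y : X) : V := qten (vhom X y x0) u.
Let from_pt (z : X) : V := qres u (vhom X x0 z).
Let loop_pt : V := qsup (fun w => w = qk \/ exists y, w = qten (from_pt y) (to_pt y)).

Definition adjoin_hom (a b : option X) : V :=
  match a, b with
  | Some y, Some z => vhom X y z
  | Some y, None => to_pt y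
  | None, Some z => from_pt z
  | None, None => loop_pt
  end.

Lemma hom_to_pt y z : qle (qten (vhom X y z) (to_pt z)) (to_pt y).
Proof. unfold to_pt. rewrite qten_assoc. apply qten_monol, vhom_trans. Qed.

Lemma to_from_pt y z : qle (qten (to_pt y) (from_pt z)) (vhom X y z).
Proof.
  unfold to_pt, from_pt. rewrite <- qten_assoc. apply (vhom_comp (y := x0)); [apply qle_refl |].
  rewrite qten_comm. apply qten_qres_le.
Qed.

Lemma from_pt_hom y z : qle (qten (from_pt y) (vhom X y z)) (from_pt z).
Proof.
  apply qle_qres. rewrite qten_AC. apply (vhom_comp (y := y)); [apply qten_qres_le | apply qle_refl].
Qed.

Lemma from_to_pt y : qle (qten (from_pt y) (to_pt y)) loop_pt.
Proof. apply qsup_ub. right. eauto. Qed.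

Lemma loop_from_pt z : qle (qten loop_pt (from_pt z)) (from_pt z).
Proof.
  apply qten_supl_le. intros s [-> | [y ->]].
  - rewrite qten_unit. apply qle_refl.
  - rewrite <- qten_assoc.
    exact (qle_trans (qten_monor _ (to_from_pt y z)) (from_pt_hom y z)).
Qed.

Lemma to_pt_loop y : qle (qten (to_pt y) loop_pt) (to_pt y).
Proof.
  apply qten_supr_le. intros s [-> | [z ->]].
  - rewrite qten_unit_r. apply qle_refl.
  - rewrite qten_assoc.
    exact (qle_trans (qten_monol _ (to_from_pt y z)) (hom_to_pt y z)).
Qed.

Lemma loop_loop : qle (qten loop_pt loop_pt) loop_pt.
Proof.
  apply qten_supr_le. intros s [-> | [z ->]].
  - rewrite qten_unit_r. apply qle_refl.
  - rewrite qten_assoc.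
    exact (qle_trans (qten_monol _ (loop_from_pt z)) (from_to_pt z)).
Qed.

Lemma adjoin_hom_refl a : qle qk (adjoin_hom a a).
Proof. destruct a; simpl; [apply vhom_refl | apply qsup_ub; now left]. Qed.

Lemma adjoin_hom_trans a b c :
  qle (qten (adjoin_hom a b) (adjoin_hom b c)) (adjoin_hom a c).
Proof.
  destruct a, b, c; simpl.
  - apply vhom_trans.
  - apply hom_to_pt.
  - apply to_from_pt.
  - apply to_pt_loop.
  - apply from_pt_hom.
  - apply from_to_pt.
  - apply loop_from_pt.
  - apply loop_loop.
Qed.

Definition adjoin_point : vcat V := VCat adjoin_hom_refl adjoin_hom_trans.

End AdjoinPoint.

Lemma injective_interpolate (V : quantale) (X : vcat V) (x0 x2 : X) (u v : V) :
  injective_vcat X -> qle (qten u v) (vhom X x0 x2) ->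
  exists x1, qle u (vhom X x0 x1) /\ qle v (vhom X x1 x2).
Proof.
  intros HX Huv.
  destruct (HX X (adjoin_point x0 u) Some (fun x => x)) as [r [Hr Hriso]];
    [intros x y; apply qle_refl | intros x y; reflexivity | intros x y; apply qle_refl |].
  exists (r None). split.
  - destruct (Hriso x0) as [_ Hx0].
    rewrite <- (qten_unit u), <- (qten_unit (qten qk u)).
    apply (vhom_comp Hx0).
    exact (qle_trans (qten_monol u (vhom_refl x0)) (Hr (Some x0) None)).
  - destruct (Hriso x2) as [Hx2 _].
    rewrite <- (qten_unit_r v). apply (vhom_comp (y := r (Some x2))); [| exact Hx2].
    refine (qle_trans _ (Hr None (Some x2))).
    apply qle_qres. now rewrite qten_comm.
Qed.

Section Exponential.
Variables (V : quantale) (Hmt : meet_tensor_condition V) (HV : heyting V)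
  (X Z : vcat V) (HX : injective_vcat X).

Definition vexp_ob : Type :=
  {f : X -> Z | forall x x', qle (qmeet qk (vhom X x x')) (vhom Z (f x) (f x'))}.

Definition vexp_hom (f g : vexp_ob) : V :=
  qsup (fun u => forall x x', qle (qmeet u (vhom X x x'))
                                  (vhom Z (proj1_sig f x) (proj1_sig g x'))).

Lemma vexp_hom_refl f : qle qk (vexp_hom f f).
Proof. apply qsup_ub. apply (proj2_sig f). Qed.

Lemma vexp_hom_trans f g h : qle (qten (vexp_hom f g) (vexp_hom g h)) (vexp_hom f h).
Proof.
  apply qten_supl_le. intros u Hu. apply qten_supr_le. intros v Hv.
  apply qsup_ub. intros x x''. rewrite qmeet_comm, Hmt.
  apply qsup_least. intros w [u' [v' [Hu' [Hv' [Hle ->]]]]].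
  destruct (injective_interpolate HX Hle) as [x' [Hx Hx']].
  apply (vhom_comp (y := proj1_sig g x')).
  - apply (qle_trans (v := qmeet u (vhom X x x'))); [now apply qmeet_glb | apply Hu].
  - apply (qle_trans (v := qmeet v (vhom X x' x''))); [now apply qmeet_glb | apply Hv].
Qed.

Definition vexp : vcat V := VCat vexp_hom_refl vexp_hom_trans.

Lemma vexp_ob_ext (f g : vexp_ob) : (forall x, proj1_sig f x = proj1_sig g x) -> f = g.
Proof.
  destruct f as [f Hf], g as [g Hg]; simpl. intros Hfg.
  assert (f = g) as <- by now apply functional_extensionality.
  f_equal. apply proof_irrelevance.
Qed.

Lemma vexp_hom_eval (f g : vexp_ob) x x' :
  qle (qmeet (vexp_hom f g) (vhom X x x')) (vhom Z (proj1_sig f x) (proj1_sig g x')).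
Proof. apply (qmeet_supl_le HV). now intros s Hs. Qed.

Definition vexp_eval (p : vexp_ob * X) : Z := proj1_sig (fst p) (snd p).

Lemma vfunctor_vexp_eval : vfunctor (X := vprod vexp X) vexp_eval.
Proof. intros [f x] [g x']. apply vexp_hom_eval. Qed.

Section Curry.
Variables (A : vcat V) (F : vprod A X -> Z) (HF : vfunctor F).

Lemma curry_mem a x x' : qle (qmeet qk (vhom X x x')) (vhom Z (F (a, x)) (F (a, x'))).
Proof.
  refine (qle_trans _ (HF (a, x) (a, x'))).
  apply qmeet_mono; [apply vhom_refl | apply qle_refl].
Qed.

Definition vexp_curry (a : A) : vexp := exist _ (fun x => F (a, x)) (curry_mem a).

Lemma vfunctor_vexp_curry : vfunctor vexp_curry.
Proof. intros a a'. apply qsup_ub. intros x x'. apply (HF (a, x) (a', x')). Qed.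

End Curry.

Lemma injective_vexp : injective_vcat Z -> injective_vcat vexp.
Proof.
  intros HZ A B i f Hi Hff Hf.
  destruct (HZ (vprod A X) (vprod B X) (fun p => (i (fst p), snd p))
              (fun p => vexp_eval (f (fst p), snd p))) as [g [Hg Hgiso]].
  - intros [a x] [a' x']. apply qmeet_mono; [apply Hi | apply qle_refl].
  - intros [a x] [a' x']. unfold vprod, vprod_hom; simpl. now rewrite Hff.
  - intros [a x] [a' x']. refine (qle_trans _ (vexp_hom_eval (f a) (f a') x x')).
    apply qmeet_mono; [apply Hf | apply qle_refl].
  - exists (vexp_curry Hg). split; [apply vfunctor_vexp_curry |].
    intros a. split; apply qsup_ub; intros x x'; simpl.
    + destruct (Hgiso (a, x)) as [Hgf _].
      rewrite <- (qten_unit (qmeet qk (vhom X x x'))).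
      apply (vhom_comp Hgf), (proj2_sig (f a)).
    + destruct (Hgiso (a, x')) as [_ Hfg].
      rewrite <- (qten_unit_r (qmeet qk (vhom X x x'))).
      apply (vhom_comp (proj2_sig (f a) x x') Hfg).
Qed.

Lemma transposes_vexp_eval (A Q : vcat V) (q1 : Q -> A) (q2 : Q -> X)
    (g : Q -> Z) (h : A -> vexp) :
  transposes (C := vprod vexp X) fst snd vexp_eval q1 q2 g h ->
  forall q, proj1_sig (h (q1 q)) (q2 q) = g q.
Proof.
  intros [m [_ Hm]] q. destruct (Hm q) as [Hm1 [Hm2 Hm3]].
  rewrite <- Hm1, <- Hm2. exact Hm3.
Qed.

Lemma vexp_is_exponential :
  injective_vcat Z ->
  is_exponential_in (@injective_vcat V) (E := vexp) (C := vprod vexp X)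
    fst snd vexp_eval.
Proof.
  intros HZ.
  assert (HE : injective_vcat vexp) by now apply injective_vexp.
  split; [exact HE |]. split; [now apply vprod_is_product, injective_vprod |].
  split; [apply vfunctor_vexp_eval |].
  intros A HA Q q1 q2 HQ g Hg.
  pose proof HQ as [_ [Hq1 [Hq2 _]]].
  destruct (is_product_in_vprod_section (injective_vprod HA HX) HQ)
    as [s [Hs [Hsproj Hsect]]].
  assert (Hgs : vfunctor (X := vprod A X) (fun p => g (s p))).
  { intros p p'. exact (qle_trans (Hs p p') (Hg _ _)). }
  split.
  - exists (vexp_curry Hgs). split; [apply vfunctor_vexp_curry |].
    exists (fun q => (vexp_curry Hgs (q1 q), q2 q)). split.
    + apply vfunctor_pair; [| exact Hq2].
      intros x y. exact (qle_trans (Hq1 x y) (vfunctor_vexp_curry Hgs _ _)).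
    + intros q. split; [reflexivity | split; [reflexivity |]].
      unfold vexp_eval; simpl. now rewrite Hsect.
  - intros h h' _ _ Hh Hh' a. apply vexp_ob_ext. intros x.
    destruct (Hsproj (a, x)) as [Ha Hx]; simpl in Ha, Hx.
    pose proof (transposes_vexp_eval Hh (s (a, x))) as Eh.
    pose proof (transposes_vexp_eval Hh' (s (a, x))) as Eh'.
    rewrite Ha, Hx in Eh, Eh'. congruence.
Qed.

End Exponential.

Theorem corollary4p4 (V : quantale) (HV : heyting V)
    (Hmt : meet_tensor_condition V) :
  cartesian_closed_sub (@injective_vcat V).
Proof.
  split; [exists (vunit V); apply vunit_is_terminal, injective_vunit |]. split.
  - intros A B HA HB. exists (vprod A B), fst, snd.
    now apply vprod_is_product, injective_vprod.
  - intros X Z HX HZ.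
    exists (vexp Hmt Z HX), (vprod (vexp Hmt Z HX) X), fst, snd, (vexp_eval (Z := Z)).
    now apply vexp_is_exponential.
Qed.
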